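(* The generating function $G(z,x)$ is algebraic of degree $4$ and \[ G(z,x)=\frac{2\left(1-\sqrt{1-4xz^2}\right)}{\sqrt{1-4xz^2}\left(\sqrt{1-4z^2}+\sqrt{1-4xz^2}\right)^2}. \]
   Context: A bicolored Dyck path is a finite sequence of steps from $\{U_1,U_2,D\}$ ($U_1,U_2$ raise the height by $1$, $D$ lowers it by $1$) starting and ending at height $0$ and never going below height $0$; its length is its number of steps, and its up-steps are its $U_1$ and $U_2$ steps. For a bicolored Dyck path containing exactly one $U_2$ step, its weight is $p$, where the $U_2$ step is the $p$-th step of the path. Let $g_{n,m}$ be the total weight of bicolored Dyck paths of length $n$ with exactly one $U_2$ step such that this $U_2$ step is the $m$-th up-step of the path, and $G(z,x)=\sum_{n,m\ge 0}g_{n,m}z^nx^m$. *)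

From Stdlib Require Import Reals ZArith.
From Coquelicot Require Import Coquelicot.
From mathcomp Require Import all_boot.

Set Implicit Arguments.
Unset Strict Implicit.
Unset Printing Implicit Defensive.

Definition step := 'I_3.
Definition U1 : step := @Ordinal 3 0 isT.
Definition U2 : step := @Ordinal 3 1 isT.
Definition Dstep : step := @Ordinal 3 2 isT.

Definition is_up (s : step) : bool := (s == U1) || (s == U2).

Fixpoint dyck_from (h : nat) (s : seq step) : bool :=
  match s with
  | [::] => h == 0%N
  | a :: t => if a == Dstep then (0 < h)%N && dyck_from h.-1 t
              else dyck_from h.+1 t
  end.

Definition is_dyck (s : seq step) : bool := dyck_from 0 s.

Definition u2_pos (s : seq step) : nat := (index U2 s).+1.

Definition u2_uprank (s : seq step) : nat := count is_up (take (u2_pos s) s).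

(* g_{n,m}: total weight of bicolored Dyck paths of length n with exactly one
   U_2 step, this U_2 step being the m-th up-step; the weight is the position
   of the U_2 step. *)
Definition g (n m : nat) : nat :=
  \sum_(t : n.-tuple step | [&& is_dyck t, count (pred1 U2) t == 1%N
                                 & u2_uprank t == m]) u2_pos t.

Local Open Scope R_scope.

(* n-th term (in z) of G(z,x) = sum_{n,m} g_{n,m} z^n x^m; since g_{n,m} = 0
   for m > n, the inner sum over m is finite (m = 0..n). *)
Definition G_term (z x : R) (n : nat) : R :=
  z ^ n * sum_f_R0 (fun m => INR (g n m) * x ^ m) n.

Definition G (z x : R) : R := Series (G_term z x).

Definition near00 (P : R -> R -> Prop) : Prop :=
  exists eps : R, 0 < eps /\
    forall z x : R, Rabs z < eps -> Rabs x < eps -> P z x.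

Definition poly3_eval (d N : nat) (c : nat -> nat -> nat -> Z) (z x y : R) : R :=
  sum_f_R0 (fun k =>
    sum_f_R0 (fun i => sum_f_R0 (fun j => IZR (c k i j) * z ^ i * x ^ j) N) N
    * y ^ k) d.

Definition algebraic_of_degree (d : nat) (F : R -> R -> R) : Prop :=
  (exists (N : nat) (c : nat -> nat -> nat -> Z),
      (exists i j : nat, (i <= N)%nat /\ (j <= N)%nat /\ c d i j <> 0%Z) /\
      near00 (fun z x => poly3_eval d N c z x (F z x) = 0)) /\
  (forall (d' N : nat) (c : nat -> nat -> nat -> Z), (d' < d)%nat ->
      near00 (fun z x => poly3_eval d' N c z x (F z x) = 0) ->
      forall k i j : nat, (k <= d')%nat -> (i <= N)%nat -> (j <= N)%nat ->
        c k i j = 0%Z).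

Definition G_closed_form (z x : R) : R :=
  2 * (1 - sqrt (1 - 4 * x * z ^ 2)) /
  (sqrt (1 - 4 * x * z ^ 2) *
   (sqrt (1 - 4 * z ^ 2) + sqrt (1 - 4 * x * z ^ 2)) ^ 2).

(* Splitting paths at their first step, the generating functions (in z, by
   starting height h) of U2-free paths, of paths with one U2 weighted by x^rank,
   and of the latter further weighted by the position of U2 satisfy linear
   recursions u_h = c_h + z (a u_(h+1) + u_(h-1)).  For small z their bounded
   solutions are unique, and explicit solutions built from the Catalan series
   C(z^2) and C(x z^2) give G in closed form.  This closed form is a root of the
   quartic obtained by multiplying over the four sign choices of the square
   roots sqrt(1 - 4 z^2) and sqrt(1 - 4 x z^2).  Conversely, rational
   parametrisations of these square roots show that a polynomial vanishing at G
   near 0 also vanishes at the three conjugates, since a rational function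
   vanishing on an interval vanishes identically; a polynomial of degree less
   than 4 in y with four distinct roots is zero. *)

From Stdlib Require Import Reals ZArith Lra.
From Coquelicot Require Import Coquelicot.
From mathcomp Require Import all_boot order ssralg poly ssrnum.
From mathcomp Require Import Rstruct.
Local Open Scope ring_scope.
Local Open Scope R_scope.

Lemma pow_le1 q n : 0 <= q <= 1 -> q ^ n <= 1.
Proof. by move=> q01; rewrite -(pow1 n); apply: pow_incr. Qed.

Lemma INR_le_pow2 n : INR n <= 2 ^ n.
Proof.
elim: n => [|n IHn]; first by rewrite /=; lra.
by rewrite S_INR /=; have := pow_R1_Rle 2 n ltac:(lra); lra.
Qed.

Lemma INR_pow_le q h : 0 <= q <= / 2 -> INR h.+1 * q ^ h <= 1.
Proof.
move=> q_bnd; elim: h => [|h IHh]; first by rewrite /=; lra.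
rewrite !S_INR /= in IHh *; have := pow_le q h ltac:(lra); have := pos_INR h; nra.
Qed.

Lemma pow_mul_le z c h : Rabs (z * c) <= 1 -> Rabs c <= 2 -> Rabs (z ^ h * c ^ h.+1) <= 2.
Proof.
move=> zc_le c_le.
rewrite (_ : _ * _ = (z * c) ^ h * c); last by rewrite Rpow_mult_distr /=; ring.
rewrite Rabs_mult -RPow_abs.
have : Rabs (z * c) ^ h <= 1 by apply: pow_le1; split => //; apply: Rabs_pos.
have := Rabs_pos c; have := pow_le _ h (Rabs_pos (z * c)); nra.
Qed.

Lemma sum_f_R0_big f n : sum_f_R0 f n = \big[Rplus/0]_(m < n.+1) f m.
Proof.
elim: n => [|n IHn] /=; first by rewrite big_ord_recr big_ord0 /= Rplus_0_l.
by rewrite big_ord_recr /= IHn.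
Qed.

Lemma is_series_zero : is_series (fun _ : nat => 0) 0.
Proof.
have := is_series_scal_l 0 _ _ (is_series_geom (/ 2) ltac:(rewrite Rabs_pos_eq; lra)).
by rewrite /scal /= /mult /= Rmult_0_l; apply: is_series_ext => n; rewrite Rmult_0_l.
Qed.

Lemma ex_series_pow_le (a : nat -> R) K r z :
  (forall n, Rabs (a n) <= K * r ^ n) -> 0 <= r -> Rabs z * r <= / 2 ->
  ex_series (fun n => a n * z ^ n) /\ Rabs (Series (fun n => a n * z ^ n)) <= 2 * K.
Proof.
move=> a_le r_ge0 zr_le.
have K_ge0 : 0 <= K by have := a_le 0%N; have := Rabs_pos (a 0%N); rewrite /=; lra.
have term_le n : Rabs (a n * z ^ n) <= K * (/ 2) ^ n.
  have zr_pow : Rabs z ^ n * r ^ n <= (/ 2) ^ n.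
    rewrite -Rpow_mult_distr; apply: pow_incr; split=> //.
    by apply: Rmult_le_pos => //; apply: Rabs_pos.
  rewrite Rabs_mult -RPow_abs.
  have := a_le n; have := pow_le _ n (Rabs_pos z); have := Rabs_pos (a n); nra.
have geom : is_series (fun n => K * (/ 2) ^ n) (2 * K).
  have := is_series_scal_l K _ _ (is_series_geom (/ 2) ltac:(rewrite Rabs_pos_eq; lra)).
  by rewrite (_ : / (1 - / 2) = 2); [rewrite Rmult_comm | field].
have abs_ex : ex_series (fun n => Rabs (a n * z ^ n)).
  apply: (ex_series_le _ _ _ (ex_intro _ _ geom)) => n.
  by rewrite /norm /= /abs /= Rabs_Rabsolu.
split; first exact: ex_series_Rabs.
apply: Rle_trans (Series_Rabs _ abs_ex) _; rewrite -(is_series_unique _ _ geom).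
by apply: Series_le; [move=> n; split; [apply: Rabs_pos | apply: term_le] | exists (2 * K)].
Qed.

Definition path_sum n (f : seq step -> R) : R :=
  \big[Rplus/0]_(t : n.-tuple step) f t.

Lemma path_sum0 f : path_sum 0 f = f [::].
Proof. by rewrite /path_sum (big_pred1 [tuple]) // => t; apply/esym/eqP/tuple0. Qed.

Lemma path_sumS n f : path_sum n.+1 f =
  path_sum n (fun t => f (U1 :: t)) + path_sum n (fun t => f (U2 :: t))
  + path_sum n (fun t => f (Dstep :: t)).
Proof.
rewrite /path_sum (reindex (fun p : step * n.-tuple step => cons_tuple p.1 p.2)) /=.
  rewrite -(pair_big xpredT xpredT (fun a (t : n.-tuple step) => f (a :: t))) /=.
  rewrite /step !big_ord_recl big_ord0 Rplus_0_r Rplus_assoc.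
  by congr (_ + (_ + _)); apply: eq_bigr => t _; congr f; congr cons; apply: val_inj.
exists (fun t : n.+1.-tuple step => (thead t, behead_tuple t)) => [[a t] _ | t _].
  by congr pair; apply: val_inj.
by rewrite [in RHS](tuple_eta t); apply: val_inj.
Qed.

Lemma eq_path_sum n f f' : (forall t, f t = f' t) -> path_sum n f = path_sum n f'.
Proof. by move=> eq_f; apply: eq_bigr. Qed.

Lemma path_sum_zero n : path_sum n (fun _ => 0) = 0.
Proof. exact: big1. Qed.

Lemma path_sumD n f f' :
  path_sum n (fun t => f t + f' t) = path_sum n f + path_sum n f'.
Proof. exact: big_split. Qed.

Lemma path_sumZ n c f : path_sum n (fun t => c * f t) = c * path_sum n f.
Proof. by rewrite /path_sum big_distrr. Qed.

Lemma path_sum_le n f M : (forall t, size t = n -> Rabs (f t) <= M) ->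
  Rabs (path_sum n f) <= 3 ^ n * M.
Proof.
elim: n f => [|n IHn] f f_le; first by rewrite path_sum0 /= Rmult_1_l; apply: f_le.
have fS_le a : Rabs (path_sum n (fun t => f (a :: t))) <= 3 ^ n * M.
  by apply: IHn => t size_t; apply: f_le; rewrite /= size_t.
rewrite path_sumS; apply: Rle_trans (Rabs_triang _ _) _.
have := Rabs_triang (path_sum n (fun t => f (U1 :: t))) (path_sum n (fun t => f (U2 :: t))).
have := fS_le U1; have := fS_le U2; have := fS_le Dstep; rewrite /=; lra.
Qed.

Lemma u2_pos_cons a t : u2_pos (a :: t) = if a == U2 then 1%N else (u2_pos t).+1.
Proof. by rewrite /u2_pos /=; case: (a == U2). Qed.

Lemma u2_uprank_cons a t : u2_uprank (a :: t) =
  if a == U2 then 1%N else if is_up a then (u2_uprank t).+1 else u2_uprank t.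
Proof.
rewrite /u2_uprank u2_pos_cons.
by case: eqP => [->|_] /=; rewrite ?take0 //; case: (is_up a).
Qed.

Lemma u2_uprank_le t : (u2_uprank t <= size t)%N.
Proof. by rewrite /u2_uprank (leq_trans (count_size _ _)) // size_take_min geq_minr. Qed.

(** * Counting paths by their starting height *)

(* First-step decomposition at height [h]: an up-step, weighted by [a], leads to
   height [h + 1]; a down-step, impossible at height 0, leads to [h - 1]. *)
Definition transfer (a : R) (u : nat -> R) (h : nat) : R :=
  a * u h.+1 + (if h is h'.+1 then u h' else 0).

Definition free_paths n h : R :=
  path_sum n (fun t => if dyck_from h t && (count (pred1 U2) t == 0)%N then 1 else 0).

Definition marked_paths x (w : nat -> R) n h : R :=
  path_sum n (fun t => if dyck_from h t && (count (pred1 U2) t == 1)%N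
                       then w (u2_pos t) * x ^ u2_uprank t else 0).

Lemma free_paths0 h : free_paths 0 h = if h == 0%N then 1 else 0.
Proof. by rewrite /free_paths path_sum0 andbT. Qed.

Lemma marked_paths0 x w h : marked_paths x w 0 h = 0.
Proof. by rewrite /marked_paths path_sum0 andbF. Qed.

Lemma free_pathsS n h : free_paths n.+1 h = transfer 1 (free_paths n) h.
Proof.
rewrite /free_paths path_sumS /transfer Rmult_1_l.
under [X in _ + X + _]eq_path_sum => t do rewrite /= andbF.
rewrite path_sum_zero Rplus_0_r; congr (_ + _); case: h => [|h] /=.
  by rewrite path_sum_zero.
by apply: eq_path_sum.
Qed.

Lemma marked_pathsS x w n h : marked_paths x w n.+1 h =
  transfer x (marked_paths x (fun p => w p.+1) n) h + x * w 1%N * free_paths n h.+1.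
Proof.
rewrite /marked_paths /free_paths path_sumS /transfer -!path_sumZ.
rewrite Rplus_assoc [X in _ + X]Rplus_comm -Rplus_assoc.
congr (_ + _ + _).
- apply: eq_path_sum => t; rewrite u2_pos_cons u2_uprank_cons /=.
  by case: (_ && _); ring.
- case: h => [|h] /=; first by rewrite path_sum_zero.
  apply: eq_path_sum => t; rewrite u2_pos_cons u2_uprank_cons /=.
  by case: (_ && _).
- apply: eq_path_sum => t; rewrite u2_pos_cons u2_uprank_cons /= add1n eqSS.
  by case: (_ && _); ring.
Qed.

Lemma marked_paths_INR_succ x n h : marked_paths x (fun p => INR p.+1) n h =
  marked_paths x INR n h + marked_paths x (fun _ => 1) n h.
Proof.
rewrite /marked_paths -path_sumD; apply: eq_path_sum => t.
by rewrite S_INR; case: ifP => _; ring.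
Qed.

Lemma free_paths_le n h : Rabs (free_paths n h) <= 3 ^ n.
Proof.
rewrite -[3 ^ n]Rmult_1_r; apply: path_sum_le => t _.
by case: ifP; rewrite ?Rabs_R1 ?Rabs_R0; lra.
Qed.

Lemma marked_paths_le x w W n h : Rabs x <= 1 -> 0 <= W ->
  (forall p, (p <= n)%N -> Rabs (w p) <= W) ->
  Rabs (marked_paths x w n h) <= 3 ^ n * W.
Proof.
move=> x_le1 W_ge0 w_le; apply: path_sum_le => t size_t.
case: ifP => [/andP[_ /eqP count1] | _]; last by rewrite Rabs_R0.
have pos_le : (u2_pos t <= n)%N.
  by rewrite -size_t index_mem -has_pred1 has_count count1.
rewrite Rabs_mult -RPow_abs -[W]Rmult_1_r.
have x_abs := Rabs_pos x.
apply: Rmult_le_compat; [apply: Rabs_pos | exact: pow_le | exact: w_le | exact: pow_le1].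
Qed.

Lemma sum_g_marked_paths n x :
  sum_f_R0 (fun m => INR (g n m) * x ^ m) n = marked_paths x INR n 0.
Proof.
have g_sum m : INR (g n m) * x ^ m = \big[Rplus/0]_(t : n.-tuple step)
    (if is_dyck t && (count (pred1 U2) t == 1)%N && (u2_uprank t == m)
     then INR (u2_pos t) * x ^ m else 0).
  rewrite /g (big_morph INR plus_INR (erefl (INR 0))) big_distrl big_mkcond /=.
  by apply: eq_bigr => t _; rewrite andbA; case: ifP; rewrite ?Rmult_0_l.
rewrite sum_f_R0_big /marked_paths /path_sum.
under eq_bigr => m _ do rewrite g_sum.
rewrite exchange_big /=; apply: eq_bigr => t _.
case: ifP => [_ | _]; last by rewrite big1 // => m _; rewrite andbF.
have rank_lt : (u2_uprank t < n.+1)%N.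
  by rewrite ltnS (leq_trans (u2_uprank_le t)) // size_tuple.
rewrite (bigD1 (Ordinal rank_lt)) //= eqxx big1 ?Rplus_0_r // => m ne_m.
by case: eqP => // rank_m; case/eqP: ne_m; apply: val_inj; rewrite /= rank_m.
Qed.

(** * Bounded solutions of the height recursion *)

Lemma transfer_le a u M : (forall h, Rabs (u h) <= M) ->
  forall h, Rabs (transfer a u h) <= (Rabs a + 1) * M.
Proof.
move=> u_le h; have M_ge0 : 0 <= M by apply: Rle_trans (u_le 0%N); apply: Rabs_pos.
have a_u : Rabs (a * u h.+1) <= Rabs a * M.
  by rewrite Rabs_mult; apply: Rmult_le_compat_l; [apply: Rabs_pos | apply: u_le].
apply: Rle_trans (Rabs_triang _ _) _; case: h a_u => [|h] /=; rewrite ?Rabs_R0.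
  by have := Rabs_pos a; nra.
by have := u_le h; lra.
Qed.

Lemma transferB a u v h :
  transfer a u h - transfer a v h = transfer a (fun k => u k - v k) h.
Proof. by case: h => [|h] /=; rewrite /transfer; ring. Qed.

Lemma is_series_transfer a (v : nat -> nat -> R) V h :
  (forall k, is_series (fun n => v n k) (V k)) ->
  is_series (fun n => transfer a (v n) h) (transfer a V h).
Proof.
move=> vV; have av := is_series_scal_l a _ _ (vV h.+1).
case: h av => [|h] av; rewrite /transfer; last exact: is_series_plus av (vV h).
by rewrite Rplus_0_r; apply: is_series_ext av => n; rewrite Rplus_0_r.
Qed.

Lemma gf_recursion a z (u b : nat -> nat -> R) (U B : nat -> R) :
  (forall h, is_series (fun n => u n h * z ^ n) (U h)) ->
  (forall h, is_series (fun n => b n h * z ^ n) (B h)) ->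
  (forall n h, u n.+1 h = transfer a (u n) h + b n h) ->
  forall h, U h = u 0%N h + z * (transfer a U h + B h).
Proof.
move=> uU bB u_rec h; rewrite -(is_series_unique _ _ (uU h)).
apply: is_series_unique; apply: is_series_decr_1.
have := is_series_scal_l z _ _ (is_series_plus _ _ _ _ (@is_series_transfer a _ _ h uU) (bB h)).
rewrite /plus /opp /scal /= /mult /= Rmult_1_r.
rewrite (_ : u 0%N h + _ + - u 0%N h = z * (transfer a U h + B h)); last by ring.
apply: is_series_ext => n; rewrite u_rec /transfer.
by case: h => [|h] /=; ring.
Qed.

Lemma transfer_fixpoint_eq0 a z (d : nat -> R) M :
  Rabs z * (Rabs a + 1) < 1 -> (forall h, Rabs (d h) <= M) ->
  (forall h, d h = z * transfer a d h) -> forall h, d h = 0.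
Proof.
move=> q_lt1 d_le d_fix h.
have q_ge0 : 0 <= Rabs z * (Rabs a + 1).
  by apply: Rmult_le_pos; [apply: Rabs_pos | have := Rabs_pos a; lra].
have d_pow k : forall h, Rabs (d h) <= (Rabs z * (Rabs a + 1)) ^ k * M.
  elim: k => [|k IHk] {}h; first by rewrite Rmult_1_l.
  rewrite d_fix Rabs_mult /= !Rmult_assoc; apply: Rmult_le_compat_l; first exact: Rabs_pos.
  exact: transfer_le.
apply: Rabs_eq_0; apply: Rle_antisym; last exact: Rabs_pos.
have q_abs : Rabs (Rabs z * (Rabs a + 1)) < 1 by rewrite Rabs_pos_eq.
have lim_pow := is_lim_seq_scal_r _ M _ (is_lim_seq_geom _ q_abs).
have := is_lim_seq_le _ _ _ _ (d_pow^~ h) (is_lim_seq_const (Rabs (d h))) lim_pow.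
by rewrite /= Rmult_0_l.
Qed.

Lemma transfer_solution_unique a z c (U V : nat -> R) M :
  Rabs z * (Rabs a + 1) < 1 ->
  (forall h, Rabs (U h) <= M) -> (forall h, Rabs (V h) <= M) ->
  (forall h, U h = c h + z * transfer a U h) ->
  (forall h, V h = c h + z * transfer a V h) -> forall h, U h = V h.
Proof.
move=> q_lt1 U_le V_le U_fix V_fix h; apply: Rminus_diag_uniq; move: h.
apply: (@transfer_fixpoint_eq0 a z _ (2 * M) q_lt1) => h.
  apply: Rle_trans (Rabs_triang _ _) _; rewrite Rabs_Ropp.
  by have := U_le h; have := V_le h; lra.
by rewrite -transferB {1}U_fix {1}V_fix; ring.
Qed.

Lemma is_series_transfer_solution a z (u b : nat -> nat -> R) (B V : nat -> R) K r M :
  Rabs z * (Rabs a + 1) < 1 -> 0 <= r -> Rabs z * r <= / 2 ->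
  (forall n h, Rabs (u n h) <= K * r ^ n) ->
  (forall h, is_series (fun n => b n h * z ^ n) (B h)) ->
  (forall n h, u n.+1 h = transfer a (u n) h + b n h) ->
  (forall h, Rabs (V h) <= M) ->
  (forall h, V h = u 0%N h + z * B h + z * transfer a V h) ->
  forall h, is_series (fun n => u n h * z ^ n) (V h).
Proof.
move=> q_lt1 r_ge0 zr_le u_le bB u_rec V_le V_fix.
pose U h := Series (fun n => u n h * z ^ n).
have u_gf h := ex_series_pow_le _ _ _ z (u_le^~ h) r_ge0 zr_le.
have uU h : is_series (fun n => u n h * z ^ n) (U h).
  by apply: Series_correct; case: (u_gf h).
have U_le h : Rabs (U h) <= 2 * K by case: (u_gf h).
have M_ge0 : 0 <= M by apply: Rle_trans (V_le 0%N); apply: Rabs_pos.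
have U_eq_V : forall h, U h = V h.
  apply: (@transfer_solution_unique a z (fun h => u 0%N h + z * B h) _ _ (2 * K + M))
    => // h.
  - by have := U_le h; lra.
  - by have := V_le h; have := U_le h; have := Rabs_pos (U h); lra.
  - by rewrite {1}(@gf_recursion a z u b U B uU bB u_rec h); ring.
by move=> h; rewrite -U_eq_V.
Qed.

(** * The generating functions in closed form *)

Definition catalan t := 2 / (1 + sqrt (1 - 4 * t)).

Lemma catalan_bounds t : 4 * t < 1 -> 0 < catalan t < 2.
Proof.
move=> t_lt; have s_gt0 : 0 < sqrt (1 - 4 * t) by apply: sqrt_lt_R0; lra.
rewrite /catalan; split; first by apply: Rdiv_lt_0_compat; lra.
by apply: (Rmult_lt_reg_r (1 + sqrt (1 - 4 * t))); [lra | field_simplify; lra].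
Qed.

Lemma catalan_eq t : 4 * t < 1 -> t * catalan t ^ 2 = catalan t - 1.
Proof.
move=> t_lt; rewrite /catalan; set s := sqrt (1 - 4 * t).
have s_ge0 : 0 <= s by apply: sqrt_pos.
have t_def : t = (1 - s * s) / 4 by rewrite sqrt_sqrt; lra.
by rewrite {1}t_def; field; lra.
Qed.

(* With [c0 = catalan (z ^ 2)] and [c1 = catalan (x * z ^ 2)], these are the sums over
   [n] of [free_paths n h], [marked_paths x (fun _ => 1) n h] and
   [marked_paths x INR n h] times [z ^ n]. *)
Definition free_gf z c0 h := z ^ h * c0 ^ h.+1.

Definition rank_gf x z c0 c1 h := x / (1 - x) * z ^ h * (c0 ^ h.+1 - c1 ^ h.+1).

Definition pos_rank_gf x z c0 c1 h :=
  x / (1 - x) / (c0 * z ^ 2 * (1 - x)) * z ^ h * (c0 ^ h.+1 - c1 ^ h.+1)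
  + x / (1 - x) * c1 ^ 2 / (c1 - 2) * INR h.+1 * z ^ h * c1 ^ h.

Lemma free_gf_rec z c0 h : z ^ 2 * c0 ^ 2 = c0 - 1 ->
  free_gf z c0 h = (if h == 0%N then 1 else 0) + z * transfer 1 (free_gf z c0) h.
Proof.
move=> c0_eq; rewrite /free_gf /transfer; case: h => [|h] /=; first by nra.
move: (z ^ h) (c0 ^ h) => zh c0h.
apply: Rminus_diag_uniq.
rewrite (_ : _ - _ = - (z * zh * c0 * c0h) * (z ^ 2 * c0 ^ 2 - (c0 - 1))); last by ring.
by rewrite c0_eq; ring.
Qed.

Section ClosedForms.

Variables x z c0 c1 : R.

Hypothesis c0_eq : z ^ 2 * c0 ^ 2 = c0 - 1.

Hypothesis c1_eq : x * z ^ 2 * c1 ^ 2 = c1 - 1.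

Hypotheses (z_neq0 : z <> 0) (c0_neq0 : c0 <> 0) (c1_neq0 : c1 <> 0).

Hypotheses (c1_neq2 : c1 - 2 <> 0) (x_neq1 : 1 - x <> 0).

(* Substituting x = (c1 - 1) / (c1^2 z^2), then c0 = 1 + u^2 and z = u / (1 + u^2)
   with u = z c0, turns both quadratic relations into identities, so that the
   remaining goal is a rational identity for [field]. *)
Local Ltac by_relations :=
  let u := fresh "u" in let x_def := fresh "x_def" in
  let c0_def := fresh "c0_def" in let z_def := fresh "z_def" in
  (have x_def : x = (c1 - 1) / (c1 ^ 2 * z ^ 2)
     by field_simplify_eq; [lra | split => //; apply: pow_nonzero]);
  set u := z * c0;
  (have c0_def : c0 = 1 + u ^ 2 by rewrite /u; lra);
  (have z_def : z = u / (1 + u ^ 2) by rewrite -c0_def /u; field);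
  (have : c1 ^ 2 * u ^ 2 - (c1 - 1) * (1 + u ^ 2) ^ 2 <> 0 by
     rewrite -c0_def /u -c1_eq (_ : _ - _ = c1 ^ 2 * z ^ 2 * c0 ^ 2 * (1 - x)); [
     repeat apply: Rmult_integral_contrapositive_currified => //; apply: pow_nonzero
   | ring]);
  (have : u <> 0 by rewrite /u; apply: Rmult_integral_contrapositive_currified);
  (have : 1 + u ^ 2 <> 0 by rewrite -c0_def);
  clearbody u; rewrite x_def z_def c0_def => ? ? ?;
  field; repeat split => //; rewrite Rpow_mult_distr.

Lemma rank_gf_rec h : rank_gf x z c0 c1 h =
  z * (x * free_gf z c0 h.+1) + z * transfer x (rank_gf x z c0 c1) h.
Proof.
rewrite /rank_gf /free_gf /transfer; case: h => [|h] /=; first by by_relations.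
by move: (z ^ h) (c0 ^ h) (c1 ^ h) => zh c0h c1h; by_relations.
Qed.

Lemma pos_rank_gf_rec h : pos_rank_gf x z c0 c1 h =
  z * (transfer x (rank_gf x z c0 c1) h + x * free_gf z c0 h.+1)
  + z * transfer x (pos_rank_gf x z c0 c1) h.
Proof.
rewrite /pos_rank_gf /rank_gf /free_gf /transfer !S_INR; case: h => [|h] /=.
  by by_relations.
by move: (z ^ h) (c0 ^ h) (c1 ^ h) (INR h) => zh c0h c1h nh; by_relations.
Qed.

End ClosedForms.

Section PathGeneratingFunctions.

Variables x z : R.

Hypotheses (z_le : Rabs z <= / 16) (x_le : Rabs x <= / 2) (z_neq0 : z <> 0).

Let c0 := catalan (z ^ 2).

Let c1 := catalan (x * z ^ 2).

Let z2_le : z ^ 2 <= / 256.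
Proof. by rewrite -pow2_abs; have := Rabs_pos z; nra. Qed.

Let x_bounds : - / 2 <= x <= / 2.
Proof. by move: x_le; rewrite /Rabs; case: Rcase_abs; lra. Qed.

Let c0_bounds : 0 < c0 < 2.
Proof. by apply: catalan_bounds; lra. Qed.

Let c1_bounds : 0 < c1 < 2.
Proof. by apply: catalan_bounds; have := pow2_ge_0 z; nra. Qed.

Let c0_eq : z ^ 2 * c0 ^ 2 = c0 - 1.
Proof. by apply: catalan_eq; lra. Qed.

Let c1_eq : x * z ^ 2 * c1 ^ 2 = c1 - 1.
Proof. by apply: catalan_eq; have := pow2_ge_0 z; nra. Qed.

Let zc_le c : 0 < c < 2 -> Rabs (z * c) <= / 8.
Proof. by move=> c_bnd; rewrite Rabs_mult (Rabs_pos_eq c); [nra | lra]. Qed.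

Lemma is_series_free_paths h : is_series (fun n => free_paths n h * z ^ n) (free_gf z c0 h).
Proof.
apply: (@is_series_transfer_solution 1 z _ (fun _ _ => 0) (fun _ => 0) _ 1 3 2).
- by rewrite Rabs_R1; lra.
- lra.
- lra.
- by move=> n k; rewrite Rmult_1_l; apply: free_paths_le.
- by move=> k; apply: is_series_ext is_series_zero => n; rewrite Rmult_0_l.
- by move=> n k; rewrite free_pathsS Rplus_0_r.
- by move=> k; apply: pow_mul_le; [have := zc_le _ c0_bounds; lra | rewrite Rabs_pos_eq; lra].
- move=> k; rewrite free_paths0 Rmult_0_r Rplus_0_r.
  exact: free_gf_rec.
Qed.

Let x_neq1 : 1 - x <> 0.
Proof. lra. Qed.

Let c1_neq2 : c1 - 2 <> 0.
Proof. lra. Qed.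

Let pow_c_le c h : 0 < c < 2 -> Rabs (z ^ h * c ^ h.+1) <= 2.
Proof.
move=> c_bnd; apply: pow_mul_le; first by have := zc_le _ c_bnd; lra.
by rewrite Rabs_pos_eq; lra.
Qed.

Let pow_diff_le h : Rabs (z ^ h * c0 ^ h.+1 - z ^ h * c1 ^ h.+1) <= 4.
Proof.
apply: Rle_trans (Rabs_triang _ _) _; rewrite Rabs_Ropp.
by have := pow_c_le _ h c0_bounds; have := pow_c_le _ h c1_bounds; lra.
Qed.

Let rank_gf_le h : Rabs (rank_gf x z c0 c1 h) <= Rabs (x / (1 - x)) * 4.
Proof.
rewrite /rank_gf [_ * z ^ h * _]Rmult_assoc [z ^ h * _]Rmult_minus_distr_l Rabs_mult.
by apply: Rmult_le_compat_l; [apply: Rabs_pos | apply: pow_diff_le].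
Qed.

Let pos_rank_gf_le h : Rabs (pos_rank_gf x z c0 c1 h) <=
  Rabs (x / (1 - x) / (c0 * z ^ 2 * (1 - x))) * 4 + Rabs (x / (1 - x) * c1 ^ 2 / (c1 - 2)).
Proof.
rewrite /pos_rank_gf; apply: Rle_trans (Rabs_triang _ _) _; apply: Rplus_le_compat.
  rewrite [_ * z ^ h * _]Rmult_assoc [z ^ h * _]Rmult_minus_distr_l Rabs_mult.
  by apply: Rmult_le_compat_l; [apply: Rabs_pos | apply: pow_diff_le].
rewrite (_ : _ * _ * _ * _ = x / (1 - x) * c1 ^ 2 / (c1 - 2) * (INR h.+1 * (z * c1) ^ h));
  last by rewrite Rpow_mult_distr; ring.
rewrite Rabs_mult -[X in _ <= X]Rmult_1_r; apply: Rmult_le_compat_l; first exact: Rabs_pos.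
rewrite Rabs_mult (Rabs_pos_eq _ (pos_INR _)) -RPow_abs; apply: INR_pow_le.
by split; [apply: Rabs_pos | have := zc_le _ c1_bounds; lra].
Qed.

Lemma is_series_rank_paths h :
  is_series (fun n => marked_paths x (fun _ => 1) n h * z ^ n) (rank_gf x z c0 c1 h).
Proof.
apply: (@is_series_transfer_solution x z _ (fun n k => x * free_paths n k.+1)
          (fun k => x * free_gf z c0 k.+1) _ 1 3 (Rabs (x / (1 - x)) * 4)).
- by have := Rabs_pos z; nra.
- lra.
- lra.
- move=> n k; rewrite Rmult_1_l -[3 ^ n]Rmult_1_r.
  by apply: marked_paths_le => [| |p _]; rewrite ?Rabs_R1; lra.
- move=> k; apply: is_series_ext (is_series_scal_l x _ _ (is_series_free_paths k.+1)) => n.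
  by rewrite /scal /= /mult /=; ring.
- by move=> n k; rewrite marked_pathsS Rmult_1_r.
- exact: rank_gf_le.
- by move=> k; rewrite marked_paths0 Rplus_0_l; apply: rank_gf_rec => //; lra.
Qed.

Lemma is_series_pos_rank_paths h :
  is_series (fun n => marked_paths x INR n h * z ^ n) (pos_rank_gf x z c0 c1 h).
Proof.
apply: (@is_series_transfer_solution x z _
          (fun n k => transfer x (marked_paths x (fun _ => 1) n) k + x * free_paths n k.+1)
          (fun k => transfer x (rank_gf x z c0 c1) k + x * free_gf z c0 k.+1) _ 1 6
          (Rabs (x / (1 - x) / (c0 * z ^ 2 * (1 - x))) * 4
           + Rabs (x / (1 - x) * c1 ^ 2 / (c1 - 2)))).
- by have := Rabs_pos z; nra.
- lra.
- lra.
- move=> n k; have pos_le : Rabs (marked_paths x INR n k) <= 3 ^ n * INR n.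
    apply: marked_paths_le => [| |p p_le]; [lra | exact: pos_INR |].
    by rewrite (Rabs_pos_eq _ (pos_INR _)); apply: le_INR; apply/ssrnat.leP.
  apply: Rle_trans pos_le _; rewrite Rmult_1_l (_ : 6 = 3 * 2) ?Rpow_mult_distr; last lra.
  by apply: Rmult_le_compat_l; [apply: pow_le; lra | apply: INR_le_pow2].
- move=> k; apply: is_series_ext (is_series_plus _ _ _ _
    (@is_series_transfer x _ _ k is_series_rank_paths)
    (is_series_scal_l x _ _ (is_series_free_paths k.+1))) => n.
  by rewrite /plus /scal /= /mult /= /transfer; case: k => [|k]; ring.
- move=> n k; rewrite marked_pathsS /transfer.
  by case: k => [|k]; rewrite !marked_paths_INR_succ [INR 1]/=; ring.
- exact: pos_rank_gf_le.
- by move=> k; rewrite marked_paths0 Rplus_0_l; apply: pos_rank_gf_rec => //; lra.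
Qed.

End PathGeneratingFunctions.

Lemma pos_rank_gf_catalan x z : z <> 0 -> 4 * z ^ 2 < 1 -> 4 * x * z ^ 2 < 1 -> x <> 1 ->
  pos_rank_gf x z (catalan (z ^ 2)) (catalan (x * z ^ 2)) 0 = G_closed_form z x.
Proof.
move=> z_neq0 z2_lt xz2_lt x_neq1.
rewrite /pos_rank_gf /G_closed_form /catalan -[4 * (x * z ^ 2)]Rmult_assoc [INR _]/=.
set s0 := sqrt (1 - 4 * z ^ 2); set s1 := sqrt (1 - 4 * x * z ^ 2).
have s0_gt0 : 0 < s0 by apply: sqrt_lt_R0; lra.
have s1_gt0 : 0 < s1 by apply: sqrt_lt_R0; lra.
have s0_sq : s0 * s0 = 1 - 4 * z ^ 2 by apply: sqrt_sqrt; lra.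
have s1_sq : s1 * s1 = 1 - 4 * x * z ^ 2 by apply: sqrt_sqrt; lra.
have z2_gt0 := pow2_gt_0 z z_neq0.
have z2_def : z ^ 2 = (1 - s0 * s0) / 4 by lra.
have x_def : x = (1 - s1 * s1) / (1 - s0 * s0) by rewrite s0_sq s1_sq; field; lra.
have s0_lt1 : s0 * s0 < 1 by lra.
have s_neq : s1 * s1 - s0 * s0 <> 0 by rewrite s0_sq s1_sq; nra.
clearbody s0 s1; rewrite z2_def x_def.
by field; repeat split; lra.
Qed.

Lemma G_closed_form_z0 x : G_closed_form 0 x = 0.
Proof.
rewrite /G_closed_form /= !Rmult_0_l !Rmult_0_r Rminus_0_r sqrt_1 Rminus_diag_eq //.
by rewrite Rmult_0_r /Rdiv !Rmult_0_l.
Qed.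

Lemma is_series_G_term z x : Rabs z <= / 16 -> Rabs x <= / 2 ->
  is_series (G_term z x) (G_closed_form z x).
Proof.
move=> z_le x_le; have [->|z_neq0] := Req_dec z 0.
  rewrite G_closed_form_z0; apply: is_series_ext is_series_zero => -[|n]; rewrite /G_term.
    by rewrite sum_g_marked_paths marked_paths0 Rmult_0_r.
  by rewrite /= !Rmult_0_l.
have z2_le : z ^ 2 <= / 256 by rewrite -pow2_abs; have := Rabs_pos z; nra.
have x_bounds : - / 2 <= x <= / 2 by move: x_le; rewrite /Rabs; case: Rcase_abs; lra.
rewrite -pos_rank_gf_catalan //; try nra.
apply: is_series_ext (is_series_pos_rank_paths _ _ z_le x_le z_neq0 0) => n.
by rewrite /G_term sum_g_marked_paths Rmult_comm.
Qed.

(** * The annihilating quartic *)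

(* The roots of [quartic y (a ^ 2) (b ^ 2)] are the four conjugates
   [G_of_roots (± a) (± b)], see [quartic_factor]. *)
Definition quartic (y A B : R) :=
  ((4 * y ^ 2 * A ^ 2 * B + 4 - A * (y * (A + B) + 2) ^ 2) ^ 2 - 64 * y ^ 2 * A ^ 2 * B) / 256.

Definition quartic_coef (k i j : nat) : Z :=
  match k, i, j with
  | 0, 4, 2 => 1%Z
  | 1, 2, 1 => -1%Z
  | 1, 4, 1 => 2%Z
  | 1, 4, 2 => 6%Z
  | 1, 6, 2 => -8%Z
  | 1, 6, 3 => -8%Z
  | 2, 2, 1 => -1%Z
  | 2, 4, 0 => 1%Z
  | 2, 4, 1 => 2%Z
  | 2, 4, 2 => 9%Z
  | 2, 6, 1 => -10%Z
  | 2, 6, 2 => -12%Z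
  | 2, 6, 3 => -26%Z
  | 2, 8, 2 => 24%Z
  | 2, 8, 3 => 16%Z
  | 2, 8, 4 => 24%Z
  | 3, 4, 0 => 1%Z
  | 3, 4, 1 => -2%Z
  | 3, 4, 2 => 1%Z
  | 3, 6, 0 => -2%Z
  | 3, 6, 1 => -6%Z
  | 3, 6, 2 => 18%Z
  | 3, 6, 3 => -10%Z
  | 3, 8, 1 => 16%Z
  | 3, 8, 3 => -48%Z
  | 3, 8, 4 => 32%Z
  | 3, 10, 2 => -32%Z
  | 3, 10, 3 => 32%Z
  | 3, 10, 4 => 32%Z
  | 3, 10, 5 => -32%Z
  | 4, 8, 0 => 1%Z
  | 4, 8, 1 => -4%Z
  | 4, 8, 2 => 6%Z
  | 4, 8, 3 => -4%Z
  | 4, 8, 4 => 1%Z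
  | 4, 10, 1 => -8%Z
  | 4, 10, 2 => 32%Z
  | 4, 10, 3 => -48%Z
  | 4, 10, 4 => 32%Z
  | 4, 10, 5 => -8%Z
  | 4, 12, 2 => 16%Z
  | 4, 12, 3 => -64%Z
  | 4, 12, 4 => 96%Z
  | 4, 12, 5 => -64%Z
  | 4, 12, 6 => 16%Z
  | _, _, _ => 0%Z
  end.

Lemma poly3_eval_quartic z x y :
  poly3_eval 4 12 quartic_coef z x y = quartic y (1 - 4 * x * z ^ 2) (1 - 4 * z ^ 2).
Proof. by rewrite /poly3_eval /quartic /=; field. Qed.

Lemma quartic_factor y a b : quartic y (a * a) (b * b) =
  (y * a * (a + b) ^ 2 - 2 * (1 - a)) * (y * a * (a - b) ^ 2 - 2 * (1 - a)) *
  (- y * a * (- a + b) ^ 2 - 2 * (1 + a)) * (- y * a * (- a - b) ^ 2 - 2 * (1 + a)) / 256.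
Proof. by rewrite /quartic; field. Qed.

Definition G_of_roots a b := 2 * (1 - a) / (a * (b + a) ^ 2).

Lemma quartic_G_of_roots a b : a <> 0 -> b + a <> 0 ->
  quartic (G_of_roots a b) (a * a) (b * b) = 0.
Proof.
move=> a_neq0 ab_neq0; rewrite quartic_factor /G_of_roots.
rewrite (_ : 2 * (1 - a) / (a * (b + a) ^ 2) * a * (a + b) ^ 2 - 2 * (1 - a) = 0).
  by rewrite /Rdiv !Rmult_0_l.
by field; split => //; rewrite Rplus_comm.
Qed.

Lemma G_eq_closed_form z x : Rabs z < / 16 -> Rabs x < / 16 -> G z x = G_closed_form z x.
Proof. by move=> z_lt x_lt; apply: is_series_unique; apply: is_series_G_term; lra. Qed.

Lemma G_closed_form_root z x : Rabs z < / 16 -> Rabs x < / 16 ->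
  poly3_eval 4 12 quartic_coef z x (G_closed_form z x) = 0.
Proof.
move=> z_lt x_lt; have z2_lt : z ^ 2 < / 256 by rewrite -pow2_abs; have := Rabs_pos z; nra.
have x_bnd : - / 16 < x < / 16 by move: x_lt; rewrite /Rabs; case: Rcase_abs; lra.
have z2_ge0 := pow2_ge_0 z.
rewrite poly3_eval_quartic /G_closed_form.
set a := sqrt (1 - 4 * x * z ^ 2); set b := sqrt (1 - 4 * z ^ 2).
have a_gt0 : 0 < a by apply: sqrt_lt_R0; nra.
have b_gt0 : 0 < b by apply: sqrt_lt_R0; nra.
have a_sq : a * a = 1 - 4 * x * z ^ 2 by apply: sqrt_sqrt; nra.
have b_sq : b * b = 1 - 4 * z ^ 2 by apply: sqrt_sqrt; nra.
by rewrite -a_sq -b_sq; apply: quartic_G_of_roots; lra.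
Qed.

Lemma G_annihilated : exists (N : nat) (c : nat -> nat -> nat -> Z),
  (exists i j : nat, (i <= N)%nat /\ (j <= N)%nat /\ c 4%nat i j <> 0%Z) /\
  near00 (fun z x => poly3_eval 4 N c z x (G z x) = 0).
Proof.
exists 12%nat, quartic_coef; split; first by exists 8%nat, 0%nat.
exists (/ 16); split; first lra.
by move=> z x z_lt x_lt; rewrite G_eq_closed_form // G_closed_form_root.
Qed.

(** * Minimality of the degree *)

Lemma interval_points m a b : a < b ->
  exists s : seq R, [/\ uniq s, size s = m & forall y, y \in s -> a < y < b].
Proof.
move=> ab; exists [seq a + (b - a) / (INR i + 2) | i <- iota 0 m]; split.
- rewrite map_inj_uniq ?iota_uniq // => i j eq_ij; apply: INR_eq.
  have := pos_INR i; have := pos_INR j => j_ge0 i_ge0.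
  have inv_eq : / (INR i + 2) = / (INR j + 2).
    by apply: (Rmult_eq_reg_l (b - a)); rewrite /Rdiv in eq_ij; lra.
  by have := Rinv_eq_reg _ _ inv_eq; lra.
- by rewrite size_map size_iota.
- move=> _ /mapP[i _ ->]; have := pos_INR i => i_ge0.
  have step_gt0 : 0 < (b - a) / (INR i + 2) by apply: Rdiv_lt_0_compat; lra.
  suff : (b - a) / (INR i + 2) < b - a by lra.
  by apply: (Rmult_lt_reg_r (INR i + 2)); [lra | field_simplify; nra].
Qed.

Lemma poly_eq0_on_interval (p : {poly R}) a b : a < b ->
  (forall u, a < u < b -> p.[u] = 0) -> p = 0%R.
Proof.
move=> ab p_eq0; have [s [s_uniq s_size s_in]] := interval_points (size p) _ _ ab.
apply: (roots_geq_poly_eq0 (rs := s)) => //; last by rewrite s_size.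
by apply/allP => u /s_in /p_eq0 /eqP.
Qed.

Lemma sum_f_R0_horner (d : nat -> R) n y :
  sum_f_R0 (fun k => d k * y ^ k) n = (\poly_(k < n.+1) d k).[y].
Proof. by rewrite sum_f_R0_big horner_poly; apply: eq_bigr => i _; rewrite RpowE. Qed.

Lemma coef_eq0_of_roots (d : nat -> R) n (s : seq R) : uniq s -> (n < size s)%N ->
  (forall y, y \in s -> sum_f_R0 (fun k => d k * y ^ k) n = 0) ->
  forall k, (k <= n)%N -> d k = 0.
Proof.
move=> s_uniq n_lt s_roots k k_le.
have p_eq0 : \poly_(k < n.+1) d k = 0%R.
  apply: (roots_geq_poly_eq0 (rs := s)) => //; last by apply: leq_trans (size_poly _ _) n_lt.
  by apply/allP => y /s_roots; rewrite sum_f_R0_horner => /eqP.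
by have := congr1 (fun p : {poly R} => p`_k) p_eq0; rewrite coef_poly coef0 ltnS k_le.
Qed.

Lemma coef_eq0_on_interval (d : nat -> R) n a b : a < b ->
  (forall y, a < y < b -> sum_f_R0 (fun k => d k * y ^ k) n = 0) ->
  forall k, (k <= n)%N -> d k = 0.
Proof.
move=> ab d_roots; have [s [s_uniq s_size s_in]] := interval_points n.+1 _ _ ab.
by apply: (@coef_eq0_of_roots d n s s_uniq); [rewrite s_size | move=> y /s_in /d_roots].
Qed.

Definition rational_off (B : R -> Prop) (f : R -> R) :=
  exists p q : {poly R}, forall u, ~ B u -> q.[u] <> 0 /\ f u = p.[u] / q.[u].

Section RationalFunctions.

Variable B : R -> Prop.

Lemma rational_off_const c : rational_off B (fun _ => c).
Proof.
exists c%:P, 1%:P => u _; rewrite !hornerC; split; first exact: R1_neq_R0.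
by rewrite /Rdiv Rinv_1 Rmult_1_r.
Qed.

Lemma rational_off_id : rational_off B id.
Proof.
exists 'X, 1%:P => u _; rewrite hornerX hornerC; split; first exact: R1_neq_R0.
by rewrite /Rdiv Rinv_1 Rmult_1_r.
Qed.

Lemma rational_offD f g : rational_off B f -> rational_off B g ->
  rational_off B (fun u => f u + g u).
Proof.
move=> [p1 [q1 f_eq]] [p2 [q2 g_eq]]; exists (p1 * q2 + p2 * q1)%R, (q1 * q2)%R => u Bu.
have [q1_neq0 ->] := f_eq u Bu; have [q2_neq0 ->] := g_eq u Bu.
rewrite hornerD !hornerM -!RmultE -RplusE.
move: (p1.[u]) (q1.[u]) (p2.[u]) (q2.[u]) q1_neq0 q2_neq0 => a1 b1 a2 b2 b1_neq0 b2_neq0.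
by split; [apply: Rmult_integral_contrapositive_currified | field].
Qed.

Lemma rational_offM f g : rational_off B f -> rational_off B g ->
  rational_off B (fun u => f u * g u).
Proof.
move=> [p1 [q1 f_eq]] [p2 [q2 g_eq]]; exists (p1 * p2)%R, (q1 * q2)%R => u Bu.
have [q1_neq0 ->] := f_eq u Bu; have [q2_neq0 ->] := g_eq u Bu.
rewrite !hornerM -!RmultE.
move: (p1.[u]) (q1.[u]) (p2.[u]) (q2.[u]) q1_neq0 q2_neq0 => a1 b1 a2 b2 b1_neq0 b2_neq0.
by split; [apply: Rmult_integral_contrapositive_currified | field].
Qed.

Lemma rational_offN f : rational_off B f -> rational_off B (fun u => - f u).
Proof.
move=> [p [q f_eq]]; exists (- p)%R, q => u Bu.
have [q_neq0 ->] := f_eq u Bu; rewrite hornerN -RoppE.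
by move: (p.[u]) (q.[u]) q_neq0 => a b b_neq0; split => //; field.
Qed.

Lemma rational_offV f : rational_off B f -> (forall u, ~ B u -> f u <> 0) ->
  rational_off B (fun u => / f u).
Proof.
move=> [p [q f_eq]] f_neq0; exists q, p => u Bu.
have [q_neq0 f_u] := f_eq u Bu.
have p_neq0 : p.[u] <> 0.
  by move=> p_eq0; apply: (f_neq0 u Bu); rewrite f_u p_eq0 /Rdiv Rmult_0_l.
rewrite f_u; move: (p.[u]) (q.[u]) p_neq0 q_neq0 => a b a_neq0 b_neq0.
by split => //; field.
Qed.

Lemma rational_off_pow f n : rational_off B f -> rational_off B (fun u => f u ^ n).
Proof.
move=> f_rat; elim: n => [|n IHn] /=; first exact: rational_off_const.
exact: rational_offM.
Qed.

Lemma rational_off_sum (F : nat -> R -> R) n : (forall k, rational_off B (F k)) ->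
  rational_off B (fun u => sum_f_R0 (fun k => F k u) n).
Proof.
move=> F_rat; elim: n => [|n IHn] /=; first exact: F_rat.
exact: rational_offD.
Qed.

Lemma rational_off_eq0 f a b : a < b -> rational_off B f ->
  (forall u, a < u < b -> ~ B u /\ f u = 0) -> forall u, ~ B u -> f u = 0.
Proof.
move=> ab [p [q f_eq]] f_eq0.
have p_eq0 : p = 0%R.
  apply: (@poly_eq0_on_interval p a b ab) => u u_in.
  have [Bu f_u] := f_eq0 u u_in; have [q_neq0 f_u'] := f_eq u Bu.
  rewrite f_u' /Rdiv in f_u; case: (Rmult_integral _ _ f_u) => // inv_eq0.
  by have := Rinv_neq_0_compat _ q_neq0.
by move=> u Bu; have [_ ->] := f_eq u Bu; rewrite p_eq0 horner0 /Rdiv Rmult_0_l.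
Qed.

End RationalFunctions.

Lemma rational_off_poly3_eval B d N c zf xf yf :
  rational_off B zf -> rational_off B xf -> rational_off B yf ->
  rational_off B (fun u => poly3_eval d N c (zf u) (xf u) (yf u)).
Proof.
move=> z_rat x_rat y_rat; apply: rational_off_sum => k.
apply: rational_offM; last exact: rational_off_pow.
apply: rational_off_sum => i; apply: rational_off_sum => j.
apply: rational_offM; last exact: rational_off_pow.
by apply: rational_offM; [apply: rational_off_const | apply: rational_off_pow].
Qed.

Lemma rational_off_G_of_roots B af bf : rational_off B af -> rational_off B bf ->
  (forall u, ~ B u -> af u <> 0 /\ bf u + af u <> 0) ->
  rational_off B (fun u => G_of_roots (af u) (bf u)).
Proof.
move=> a_rat b_rat ab_neq0; apply: rational_offM.
  by apply: rational_offM; [apply: rational_off_const | apply: rational_offD;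
    [apply: rational_off_const | apply: rational_offN]].
apply: rational_offV; first by apply: rational_offM => //; apply/rational_off_pow/rational_offD.
move=> u Bu; have [a_neq0 ab_neq0'] := ab_neq0 u Bu.
by apply: Rmult_integral_contrapositive_currified => //; apply: pow_nonzero.
Qed.

(* [u |-> (z_par u, b_par u)] rationally parametrizes the conic [b^2 = 1 - 4 z^2], and
   [u |-> / u] fixes [z] while flipping the sign of [b]. *)
Definition z_par u := u / (1 + u ^ 2).

Definition b_par u := (1 - u ^ 2) / (1 + u ^ 2).

Definition x_par a u := (1 - a ^ 2) / (4 * z_par u ^ 2).

Lemma b_par_sq u : 1 - 4 * z_par u ^ 2 = b_par u ^ 2.
Proof. by rewrite /z_par /b_par; field; have := pow2_ge_0 u; lra. Qed.

Lemma x_par_sq a u : u <> 0 -> 1 - 4 * x_par a u * z_par u ^ 2 = a ^ 2.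
Proof.
by move=> u_neq0; rewrite /x_par /z_par; field; split => //; have := pow2_ge_0 u; lra.
Qed.

Lemma z_par_inv u : u <> 0 -> z_par (/ u) = z_par u.
Proof. by move=> u_neq0; rewrite /z_par; field; split => //; have := pow2_ge_0 u; nra. Qed.

Lemma b_par_inv u : u <> 0 -> b_par (/ u) = - b_par u.
Proof. by move=> u_neq0; rewrite /b_par; field; split => //; have := pow2_ge_0 u; nra. Qed.

Lemma x_par_inv a u : u <> 0 -> x_par a (/ u) = x_par a u.
Proof. by move=> u_neq0; rewrite /x_par z_par_inv. Qed.

Lemma z_par_bounds u : 0 < u -> 0 < z_par u <= u.
Proof.
move=> u_gt0; have := pow2_ge_0 u => u2_ge0; rewrite /z_par.
split; first by apply: Rdiv_lt_0_compat; lra.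
by apply: (Rmult_le_reg_r (1 + u ^ 2)); [lra | field_simplify; nra].
Qed.

Lemma b_par_gt0 u : 0 < u < 1 -> 0 < b_par u.
Proof. by move=> u_bnd; rewrite /b_par; apply: Rdiv_lt_0_compat; have := pow2_ge_0 u; nra. Qed.

Lemma x_par_le a u0 u : 0 < a < 1 -> 0 < u0 <= u -> u <= 1 -> x_par a u <= x_par a u0.
Proof.
move=> a_bnd u0_bnd u_le1.
have x_parE v : 0 < v -> x_par a v = (1 - a ^ 2) / 4 * (v + / v) ^ 2.
  by move=> v_gt0; rewrite /x_par /z_par; field; split; [lra | have := pow2_ge_0 v; lra].
rewrite !x_parE; try lra.
apply: Rmult_le_compat_l; first by nra.
apply: pow_incr; split; first by have := Rinv_0_lt_compat u ltac:(lra); lra.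
have inv_diff : / u0 - / u = (u - u0) / (u * u0) by field; lra.
suff : u - u0 <= (u - u0) / (u * u0) by lra.
apply: (Rmult_le_reg_r (u * u0)); first nra.
rewrite /Rdiv Rmult_assoc Rinv_l ?Rmult_1_r; last nra.
have : 0 <= (u - u0) * (1 - u * u0) by apply: Rmult_le_pos; nra.
lra.
Qed.

Lemma rational_off_z_par B : rational_off B z_par.
Proof.
apply: rational_offM; first exact: rational_off_id.
apply: rational_offV => [|u _]; last by have := pow2_ge_0 u; lra.
by apply: rational_offD; [apply: rational_off_const | apply/rational_off_pow/rational_off_id].
Qed.

Lemma rational_off_b_par B : rational_off B b_par.
Proof.
have u2_rat : rational_off B (fun u => u ^ 2) by apply/rational_off_pow/rational_off_id.
apply: rational_offM.
  by apply: rational_offD; [apply: rational_off_const | apply: rational_offN].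
apply: rational_offV => [|u _]; last by have := pow2_ge_0 u; lra.
by apply: rational_offD => //; apply: rational_off_const.
Qed.

Lemma rational_off_x_par B a : (forall u, ~ B u -> u <> 0) -> rational_off B (x_par a).
Proof.
move=> B_neq0; apply: rational_offM; first exact: rational_off_const.
apply: rational_offV => [|u Bu].
  apply: rational_offM; first exact: rational_off_const.
  exact/rational_off_pow/rational_off_z_par.
have z_neq0 : z_par u <> 0.
  rewrite /z_par /Rdiv; apply: Rmult_integral_contrapositive_currified; first exact: B_neq0.
  by apply: Rinv_neq_0_compat; have := pow2_ge_0 u; lra.
by apply: Rmult_integral_contrapositive_currified; [lra | apply: pow_nonzero].
Qed.

Lemma conjugate_bounds z x : 0 < z < / 2 -> 0 < x < 1 ->
  [/\ 0 < sqrt (1 - 4 * z ^ 2), sqrt (1 - 4 * z ^ 2) < sqrt (1 - 4 * x * z ^ 2),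
      sqrt (1 - 4 * x * z ^ 2) < 1, sqrt (1 - 4 * z ^ 2) ^ 2 = 1 - 4 * z ^ 2
    & sqrt (1 - 4 * x * z ^ 2) ^ 2 = 1 - 4 * x * z ^ 2].
Proof.
move=> z_bnd x_bnd; have z2_gt0 : 0 < z ^ 2 by apply: pow_lt; lra.
have z2_lt : z ^ 2 < / 4 by nra.
have b_sq : sqrt (1 - 4 * z ^ 2) ^ 2 = 1 - 4 * z ^ 2 by apply: pow2_sqrt; lra.
have a_sq : sqrt (1 - 4 * x * z ^ 2) ^ 2 = 1 - 4 * x * z ^ 2 by apply: pow2_sqrt; nra.
have b_gt0 : 0 < sqrt (1 - 4 * z ^ 2) by apply: sqrt_lt_R0; lra.
have a_gt0 : 0 < sqrt (1 - 4 * x * z ^ 2) by apply: sqrt_lt_R0; nra.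
by split => //; nra.
Qed.

Lemma par_surj z : 0 < z < / 2 ->
  exists u, [/\ 0 < u < 2 * z, z_par u = z & b_par u = sqrt (1 - 4 * z ^ 2)].
Proof.
move=> z_bnd; have [b_gt0 _ _ b_sq _] := @conjugate_bounds z (/ 2) z_bnd ltac:(lra).
set b := sqrt (1 - 4 * z ^ 2) in b_gt0 b_sq *.
have z2_def : z ^ 2 = (1 - b ^ 2) / 4 by lra.
have u_sq : (2 * z / (1 + b)) ^ 2 = (1 - b) / (1 + b).
  rewrite (_ : _ ^ 2 = 4 * z ^ 2 / (1 + b) ^ 2); last by field; lra.
  by rewrite z2_def; field; lra.
exists (2 * z / (1 + b)); split.
- split; first by apply: Rdiv_lt_0_compat; lra.
  by apply: (Rmult_lt_reg_r (1 + b)); [lra | field_simplify; nra].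
- by rewrite /z_par u_sq; field; lra.
- by rewrite /b_par u_sq; field; lra.
Qed.

Lemma G_of_roots_conjugates_uniq a b : 0 < b < a -> a < 1 ->
  uniq [:: G_of_roots (- a) b; G_of_roots (- a) (- b); G_of_roots a b; G_of_roots a (- b)].
Proof.
move=> ab a_lt1; set p := a * (a - b) ^ 2; set q := a * (a + b) ^ 2.
have pq : 0 < p < q.
  have ab2 : 0 < (a - b) ^ 2 by apply: pow_lt; lra.
  by rewrite /p /q; split; [apply: Rmult_lt_0_compat; lra | apply: Rmult_lt_compat_l; nra].
have div_lt K : 0 < K -> 0 < K / q < K / p.
  move=> K_gt0; split; first by apply: Rdiv_lt_0_compat; lra.
  by apply: Rmult_lt_compat_l => //; apply: Rinv_lt_contravar; nra.
have [G1 G2] := div_lt (2 * (1 + a)) ltac:(lra).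
have [G3 G4] := div_lt (2 * (1 - a)) ltac:(lra).
have -> : G_of_roots (- a) b = - (2 * (1 + a) / p) by rewrite /G_of_roots /p; field; nra.
have -> : G_of_roots (- a) (- b) = - (2 * (1 + a) / q) by rewrite /G_of_roots /q; field; nra.
have -> : G_of_roots a b = 2 * (1 - a) / q by rewrite /G_of_roots /q Rplus_comm.
have -> : G_of_roots a (- b) = 2 * (1 - a) / p by rewrite /G_of_roots /p; field; nra.
apply: Order.POrderTheory.lt_sorted_uniq => /=.
by apply/and4P; split => //; apply/RltP; lra.
Qed.

Definition poly3_coef N (c : nat -> nat -> nat -> Z) k z x :=
  sum_f_R0 (fun i => sum_f_R0 (fun j => IZR (c k i j) * z ^ i * x ^ j) N) N.

Section Minimality.

Variables (d N : nat) (c : nat -> nat -> nat -> Z) (eps : R).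

Hypotheses (eps_gt0 : 0 < eps) (eps_le : eps <= / 16).

Hypothesis vanish : forall z x, Rabs z < eps -> Rabs x < eps ->
  poly3_eval d N c z x (G_closed_form z x) = 0.

Lemma vanish_par a u : 0 < a < 1 -> 0 < u < 1 -> u < eps -> x_par a u < eps ->
  poly3_eval d N c (z_par u) (x_par a u) (G_of_roots a (b_par u)) = 0.
Proof.
move=> a_bnd u_bnd u_lt x_lt; have [z_gt0 z_le] := z_par_bounds _ (proj1 u_bnd).
have x_gt0 : 0 < x_par a u.
  by apply: Rdiv_lt_0_compat; [nra | have := pow_lt _ 2 z_gt0; lra].
have b_gt0 := b_par_gt0 _ u_bnd.
have := vanish (z_par u) (x_par a u); rewrite /G_closed_form x_par_sq ?b_par_sq; last lra.
rewrite !sqrt_pow2; try lra; apply; rewrite Rabs_pos_eq; lra.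
Qed.

Lemma vanish_flip_b z0 x0 : 0 < z0 < eps / 4 -> 0 < x0 < eps / 4 ->
  poly3_eval d N c z0 x0
    (G_of_roots (sqrt (1 - 4 * x0 * z0 ^ 2)) (- sqrt (1 - 4 * z0 ^ 2))) = 0.
Proof.
move=> z0_bnd x0_bnd.
have [b0_gt0 b0_lt a0_lt1 b0_sq a0_sq] := @conjugate_bounds z0 x0 ltac:(lra) ltac:(lra).
have [u0 [u0_bnd z_u0 b_u0]] := par_surj z0 ltac:(lra).
set a0 := sqrt (1 - 4 * x0 * z0 ^ 2) in b0_lt a0_lt1 a0_sq *.
set b0 := sqrt (1 - 4 * z0 ^ 2) in b0_gt0 b0_lt b0_sq b_u0 *.
have x_u0 : x_par a0 u0 = x0.
  by rewrite /x_par z_u0 a0_sq; field; lra.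
pose B u := u = 0 \/ b_par u + a0 = 0.
pose f u := poly3_eval d N c (z_par u) (x_par a0 u) (G_of_roots a0 (b_par u)).
have f_rat : rational_off B f.
  apply: rational_off_poly3_eval.
  - exact: rational_off_z_par.
  - by apply: rational_off_x_par => u Bu u_eq0; apply: Bu; left.
  - apply: rational_off_G_of_roots; [exact: rational_off_const | exact: rational_off_b_par |].
    by move=> u Bu; split; [lra | move=> ab_eq0; apply: Bu; right].
have u0_neq0 : u0 <> 0 by lra.
(* [f] vanishes on (u0, eps / 2) by [vanish_par], and at [/ u0] the sign of [b_par] flips. *)
have := @rational_off_eq0 B f u0 (eps / 2) ltac:(lra) f_rat _ (/ u0).
rewrite /f z_par_inv // x_par_inv // b_par_inv // z_u0 x_u0 b_u0; apply.
- move=> u u_bnd; have b_gt0 := b_par_gt0 u ltac:(lra).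
  split; first by rewrite /B; lra.
  apply: vanish_par; try lra.
  by apply: Rle_lt_trans (x_par_le a0 u0 u _ _ _) _; lra.
- by rewrite /B b_par_inv // b_u0; have := Rinv_neq_0_compat _ u0_neq0; lra.
Qed.

Lemma vanish_flip_a z0 x0 b : 0 < z0 < eps / 4 -> 0 < x0 < eps / 4 ->
  Rabs b = sqrt (1 - 4 * z0 ^ 2) ->
  (forall x, 0 < x < eps / 4 ->
     poly3_eval d N c z0 x (G_of_roots (sqrt (1 - 4 * x * z0 ^ 2)) b) = 0) ->
  poly3_eval d N c z0 x0 (G_of_roots (- sqrt (1 - 4 * x0 * z0 ^ 2)) b) = 0.
Proof.
move=> z0_bnd x0_bnd b_abs b_vanish.
have [b0_gt0 b0_lt a0_lt1 _ a0_sq] := @conjugate_bounds z0 x0 ltac:(lra) ltac:(lra).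
rewrite -b_abs in b0_gt0 b0_lt.
set a0 := sqrt (1 - 4 * x0 * z0 ^ 2) in b0_lt a0_lt1 a0_sq *.
have b_bnd : - Rabs b <= b <= Rabs b.
  by split; [rewrite -Rabs_Ropp; have := Rle_abs (- b) | have := Rle_abs b]; lra.
have z2_gt0 : 0 < z0 ^ 2 by apply: pow_lt; lra.
pose x_of a := (1 - a ^ 2) / (4 * z0 ^ 2).
have x_ofE a : 1 - 4 * x_of a * z0 ^ 2 = a ^ 2 by rewrite /x_of; field; lra.
have x_of_a0 : x_of a0 = x0.
  by rewrite /x_of a0_sq; field; lra.
pose B a := a = 0 \/ b + a = 0.
pose f a := poly3_eval d N c z0 (x_of a) (G_of_roots a b).
have f_rat : rational_off B f.
  apply: rational_off_poly3_eval; first exact: rational_off_const.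
    apply: rational_offM; last exact: rational_off_const.
    apply: rational_offD; first exact: rational_off_const.
    by apply/rational_offN/rational_off_pow/rational_off_id.
  apply: rational_off_G_of_roots; [exact: rational_off_id | exact: rational_off_const |].
  by move=> a Ba; split => a_eq0; apply: Ba; [left | right].
(* Parametrised by [a = sqrt (1 - 4 x z0 ^ 2)], [f] vanishes on (a0, 1), hence at [- a0]. *)
have := @rational_off_eq0 B f a0 1 a0_lt1 f_rat _ (- a0).
rewrite /f (_ : x_of (- a0) = x0); last by rewrite -x_of_a0 /x_of /Rdiv; ring.
apply; last by rewrite /B; lra.
move=> a a_bnd; split; first by rewrite /B; lra.
have x_of_gt0 : 0 < x_of a by apply: Rdiv_lt_0_compat; nra.
have x_of_lt : x_of a < x0.
  by rewrite -x_of_a0 /x_of; apply: Rmult_lt_compat_r; [apply: Rinv_0_lt_compat |]; nra.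
by have := b_vanish (x_of a); rewrite x_ofE sqrt_pow2; [apply; lra | lra].
Qed.

Hypothesis d_lt4 : (d < 4)%N.

Lemma poly3_coef_eq0 z0 x0 : 0 < z0 < eps / 4 -> 0 < x0 < eps / 4 ->
  forall k, (k <= d)%N -> poly3_coef N c k z0 x0 = 0.
Proof.
move=> z0_bnd x0_bnd.
have b_abs : Rabs (sqrt (1 - 4 * z0 ^ 2)) = sqrt (1 - 4 * z0 ^ 2).
  by rewrite Rabs_pos_eq //; apply: sqrt_pos.
have small x : 0 < x < eps / 4 -> Rabs x < eps by move=> x_bnd; rewrite Rabs_pos_eq; lra.
have root_pp := vanish _ _ (small _ z0_bnd) (small _ x0_bnd).
have root_pm := vanish_flip_b _ _ z0_bnd x0_bnd.
have root_mp := vanish_flip_a _ _ _ z0_bnd x0_bnd b_abs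
  (fun x x_bnd => vanish _ _ (small _ z0_bnd) (small _ x_bnd)).
have root_mm := vanish_flip_a _ _ _ z0_bnd x0_bnd
  (etrans (Rabs_Ropp _) b_abs) (fun x x_bnd => vanish_flip_b _ _ z0_bnd x_bnd).
have [b0_gt0 b0_lt a0_lt1 _ _] := @conjugate_bounds z0 x0 ltac:(lra) ltac:(lra).
move: root_pp root_pm root_mp root_mm b0_gt0 b0_lt a0_lt1; rewrite /G_closed_form.
set a0 := sqrt (1 - 4 * x0 * z0 ^ 2); set b0 := sqrt (1 - 4 * z0 ^ 2).
move=> root_pp root_pm root_mp root_mm b0_gt0 b0_lt a0_lt1.
apply: (@coef_eq0_of_roots _ d
  [:: G_of_roots (- a0) b0; G_of_roots (- a0) (- b0); G_of_roots a0 b0; G_of_roots a0 (- b0)]).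
- by apply: G_of_roots_conjugates_uniq; lra.
- exact: d_lt4.
- by move=> y; rewrite !inE => /or4P[] /eqP ->.
Qed.

Lemma poly3_eval_coef_eq0 k i j : (k <= d)%N -> (i <= N)%N -> (j <= N)%N -> c k i j = 0%Z.
Proof.
move=> k_le i_le j_le; apply: eq_IZR_R0.
have x_coef_eq0 x0 : 0 < x0 < eps / 4 ->
    sum_f_R0 (fun j => IZR (c k i j) * x0 ^ j) N = 0.
  move=> x0_bnd; apply: (@coef_eq0_on_interval
    (fun i => sum_f_R0 (fun j => IZR (c k i j) * x0 ^ j) N) N 0 (eps / 4)) => // [|z0 z0_bnd].
    lra.
  rewrite -(poly3_coef_eq0 _ _ z0_bnd x0_bnd _ k_le) /poly3_coef; apply: PartSum.sum_eq => i' _.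
  by rewrite Rmult_comm scal_sum; apply: PartSum.sum_eq => j' _; ring.
by apply: (@coef_eq0_on_interval (fun j => IZR (c k i j)) N 0 (eps / 4)) => //; lra.
Qed.

End Minimality.

Lemma G_minimal d N c : (d < 4)%N ->
  near00 (fun z x => poly3_eval d N c z x (G z x) = 0) ->
  forall k i j, (k <= d)%N -> (i <= N)%N -> (j <= N)%N -> c k i j = 0%Z.
Proof.
move=> d_lt4 [eps [eps_gt0 G_root]].
have eps'_gt0 : 0 < Rmin eps (/ 16) by apply: Rmin_glb_lt; lra.
have eps'_le := Rmin_l eps (/ 16); have eps'_le16 := Rmin_r eps (/ 16).
apply: (@poly3_eval_coef_eq0 d N c (Rmin eps (/ 16))) => // z x z_lt x_lt.
by rewrite -G_eq_closed_form; [apply: G_root | ..]; lra.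
Qed.

Theorem proposition15 :
  algebraic_of_degree 4 G /\
  near00 (fun z x => is_series (G_term z x) (G_closed_form z x)).
Proof.
split; first by split; [exact: G_annihilated | exact: G_minimal].
exists (/ 16); split; first lra.
by move=> z x z_lt x_lt; apply: is_series_G_term; lra.
Qed.
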